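(* Let $g\colon\mathbb{S}^1\to\mathbb{S}^1$ be an orientation-preserving homeomorphism. For $i=1,2$, the map $\widetilde\iota_i=Q\circ\iota_i\colon\overline Z_i\to\widetilde Z$ is $1$-Lipschitz (with respect to $\sigma$ and $d_{\widetilde Z}$) and is a local isometry on $Z_i$. Moreover, for every $z\in\widetilde Z$ the preimage $\widetilde\iota_i^{-1}(z)$ is compact and connected, and it contains two or more points only if $\widetilde\iota_i^{-1}(z)\subset\mathbb{S}^1$.
   Context: Let $\mathbb{S}^2\subset\mathbb{R}^3$ be the unit sphere with great-circle distance $\sigma$, $\mathbb{S}^1$ the equator, $Z_1,Z_2$ the open southern and northern hemispheres. For an orientation-preserving homeomorphism $g\colon\mathbb{S}^1\to\mathbb{S}^1$, $Z$ is obtained from $\overline Z_1\sqcup\overline Z_2$ by identifying $z\in\mathbb{S}^1\subset\overline Z_1$ with $g(z)\in\mathbb{S}^1\subset\overline Z_2$, with maps $\iota_i\colon\overline Z_i\to Z$. Define $D(x,y)=\infty$ if one point is in $\iota_1(Z_1)$ and the other in $\iota_2(Z_2)$; $D(\iota_1(a),\iota_1(b))=\min\{\sigma(a,b),\sigma(g(a),g(b))\}$ for $a,b\in\mathbb{S}^1$; otherwise $D(x,y)=\sigma(\iota_i^{-1}(x),\iota_i^{-1}(y))$ for the common $i$. $d_Z=\inf\sum_k D(x_k,x_{k+1})$ over finite chains; $\widetilde Z$ is the metric space obtained by identifying points at $d_Z$-distance 0, $Q\colon Z\to\widetilde Z$ the quotient map, $d_{\widetilde Z}$ the induced distance. *)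

From Stdlib Require Import Reals List.
From Coquelicot Require Import Coquelicot.
Open Scope R_scope.

Record pt := mkpt { px : R; py : R; pz : R }.

Definition dot (a b : pt) : R := px a * px b + py a * py b + pz a * pz b.

Definition onS2 (p : pt) : Prop := dot p p = 1.
Definition onS1 (p : pt) : Prop := onS2 p /\ pz p = 0.

Definition gdist (a b : pt) : R := acos (dot a b).

(** The two hemispheres: [south] is Z_1, [north] is Z_2. *)
Inductive hemi := south | north.

Definition openH (i : hemi) (p : pt) : Prop :=
  onS2 p /\ match i with south => pz p < 0 | north => 0 < pz p end.
Definition closedH (i : hemi) (p : pt) : Prop :=
  onS2 p /\ match i with south => pz p <= 0 | north => 0 <= pz p end.

Definition eqpt (t : R) : pt := mkpt (cos t) (sin t) 0.

(** g : S^1 -> S^1 is a homeomorphism (w.r.t. gdist) with inverse ginv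
    (only the values of g, ginv on S^1 matter). *)
Definition cont_on_S1 (f : pt -> pt) : Prop :=
  forall p, onS1 p -> forall eps, 0 < eps -> exists delta, 0 < delta /\
    forall q, onS1 q -> gdist p q < delta -> gdist (f p) (f q) < eps.

Definition circle_homeo (g ginv : pt -> pt) : Prop :=
  (forall p, onS1 p -> onS1 (g p) /\ onS1 (ginv p) /\
                       ginv (g p) = p /\ g (ginv p) = p) /\
  cont_on_S1 g /\ cont_on_S1 ginv.

Definition orientation_preserving (g : pt -> pt) : Prop :=
  exists G : R -> R,
    (forall s t, s < t -> G s < G t) /\
    (forall t, G (t + 2 * PI) = G t + 2 * PI) /\
    (forall t, g (eqpt t) = eqpt (G t)).

(** As a set, Z = iota_1(closed Z_1) disjoint-union
    iota_2(Z_2); a point of the equator z is represented by [zS z]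
    (= iota_1 z = iota_2 (g z)).  [zS a] must have a in closed Z_1,
    [zN b] must have b in open Z_2. *)
Inductive Zpt := zS (a : pt) | zN (b : pt).

Definition inZ (x : Zpt) : Prop :=
  match x with zS a => closedH south a | zN b => openH north b end.

Definition iotaZ (ginv : pt -> pt) (i : hemi) (p : pt) : Zpt :=
  match i with
  | south => zS p
  | north => if Req_EM_T (pz p) 0 then zS (ginv p) else zN p
  end.

Definition Dfun (g : pt -> pt) (x y : Zpt) : Rbar :=
  match x, y with
  | zS a, zS b =>
      if Req_EM_T (pz a) 0 then
        if Req_EM_T (pz b) 0 then Finite (Rmin (gdist a b) (gdist (g a) (g b)))
        else Finite (gdist a b)
      else Finite (gdist a b)
  | zS a, zN b =>
      if Req_EM_T (pz a) 0 then Finite (gdist (g a) b) else p_infty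
  | zN a, zS b =>
      if Req_EM_T (pz b) 0 then Finite (gdist a (g b)) else p_infty
  | zN a, zN b => Finite (gdist a b)
  end.

(** Cost of the chain x = x_0, x_1, ..., x_n = y (l = [x_1; ...; x_{n-1}]). *)
Fixpoint chain_cost (g : pt -> pt) (x : Zpt) (l : list Zpt) (y : Zpt) : Rbar :=
  match l with
  | nil => Dfun g x y
  | z :: l' => Rbar_plus (Dfun g x z) (chain_cost g z l' y)
  end.

Definition dZ (g : pt -> pt) (x y : Zpt) : Rbar :=
  Glb_Rbar (fun r : R => exists l : list Zpt,
                 List.Forall inZ l /\ chain_cost g x l y = Finite r).

(** Z~ is the quotient of Z by {d_Z = 0}; with Q the quotient map,
    d_{Z~}(Q x, Q y) = d_Z(x, y), and the preimage under
    iota~_i = Q o iota_i of the class Q x is the set below. *)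
Definition tilde_preimage (g ginv : pt -> pt) (i : hemi) (x : Zpt) : pt -> Prop :=
  fun a => closedH i a /\ dZ g (iotaZ ginv i a) x = Finite 0.

Definition sopen (U : pt -> Prop) : Prop :=
  forall p, onS2 p -> U p -> exists eps, 0 < eps /\
    forall q, onS2 q -> gdist p q < eps -> U q.

Definition scompact (K : pt -> Prop) : Prop :=
  (forall p, K p -> onS2 p) /\
  forall (I : Type) (U : I -> pt -> Prop),
    (forall j, sopen (U j)) ->
    (forall p, K p -> exists j, U j p) ->
    exists l : list I, forall p, K p -> exists j, List.In j l /\ U j p.

Definition sconnected (K : pt -> Prop) : Prop :=
  ~ exists U V : pt -> Prop,
      sopen U /\ sopen V /\
      (forall p, K p -> U p \/ V p) /\
      (forall p, K p -> U p -> V p -> False) /\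
      (exists p, K p /\ U p) /\ (exists p, K p /\ V p).

(** - Lipschitz: a one-step chain from iota_i a to iota_i b costs at most
    [gdist a b].
  - Local isometry: an interior point a of Z_i is at positive distance from
    the equator; a chain from near a either touches the equator (too
    expensive) or stays in Z_i, where the triangle inequality bounds the
    spherical distance by its cost.  The same "exit" argument shows that a
    fibre containing an interior point is that single point.
  - Fibres on the equator: in angle coordinates, a chain of cost r between
    equator points p and q "sweeps" an interval from an angle of p to one
    of q whose points are all r-close to p; that the increasing lift [G] of
    [g] makes the D-cost monotone along intervals is where orientation is
    used.  So a null class meets the equator in an arc: fibres are
    arc-connected, hence connected, and closed in the angle, hence compact.
*)

From Stdlib Require Import Reals Lra Lia Psatz List Classical ZArith Rtopology
  IndefiniteDescription.
From Coquelicot Require Import Coquelicot.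
Open Scope R_scope.

(** ** Spherical geometry *)

Lemma dot_comm a b : dot a b = dot b a.
Proof. unfold dot; ring. Qed.

Lemma gdist_sym a b : gdist a b = gdist b a.
Proof. unfold gdist; now rewrite dot_comm. Qed.

Lemma dot_bound a b : onS2 a -> onS2 b -> -1 <= dot a b <= 1.
Proof.
  unfold onS2, dot; destruct a as [a1 a2 a3], b as [b1 b2 b3]; simpl; intros Ha Hb.
  assert (Lagrange : (a1*b1+a2*b2+a3*b3)^2
            + ((a2*b3-a3*b2)^2+(a3*b1-a1*b3)^2+(a1*b2-a2*b1)^2)
          = (a1*a1+a2*a2+a3*a3)*(b1*b1+b2*b2+b3*b3)) by ring.
  rewrite Ha, Hb in Lagrange.
  assert (0 <= (a2*b3-a3*b2)^2+(a3*b1-a1*b3)^2+(a1*b2-a2*b1)^2)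
    by (repeat apply Rplus_le_le_0_compat; apply pow2_ge_0).
  split; nra.
Qed.

Lemma acos_antitone x y : -1 <= x -> x <= y -> y <= 1 -> acos y <= acos x.
Proof.
  intros. destruct (Rle_or_lt (acos y) (acos x)) as [h|h]; auto.
  pose proof (acos_bound x); pose proof (acos_bound y).
  pose proof (cos_decreasing_1 (acos x) (acos y) ltac:(lra) ltac:(lra) ltac:(lra) ltac:(lra) h)
    as Hcos.
  rewrite !cos_acos in Hcos by lra. lra.
Qed.

Lemma acos_antitone_strict x y : -1 <= x -> x < y -> y <= 1 -> acos y < acos x.
Proof.
  intros. destruct (acos_antitone x y ltac:(lra) ltac:(lra) ltac:(lra)) as [h|h]; auto.
  assert (Hcos : cos (acos y) = cos (acos x)) by now rewrite h.
  rewrite !cos_acos in Hcos by lra. lra.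
Qed.

Lemma gdist_nonneg a b : 0 <= gdist a b.
Proof. unfold gdist; apply acos_bound. Qed.

Lemma gdist_self a : onS2 a -> gdist a a = 0.
Proof. unfold gdist, onS2; intros ->; apply acos_1. Qed.

Lemma gdist_eq0 a b : onS2 a -> onS2 b -> gdist a b = 0 -> a = b.
Proof.
  intros Ha Hb H. pose proof (dot_bound a b Ha Hb).
  assert (Hdot : dot a b = 1).
  { unfold gdist in H. rewrite <- (cos_acos (dot a b)) by lra. rewrite H; apply cos_0. }
  unfold onS2, dot in *; destruct a as [a1 a2 a3], b as [b1 b2 b3]; simpl in *.
  assert ((a1-b1)^2+(a2-b2)^2+(a3-b3)^2 = 0) by nra.
  pose proof (pow2_ge_0 (a1-b1)); pose proof (pow2_ge_0 (a2-b2));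
    pose proof (pow2_ge_0 (a3-b3)).
  assert (a1-b1 = 0) by nra; assert (a2-b2 = 0) by nra; assert (a3-b3 = 0) by nra.
  f_equal; lra.
Qed.

(** The triangle inequality for the great-circle distance: with
    x, y, z the three scalar products, the Gram determinant gives
    (1-x^2)(1-y^2) >= (z-xy)^2, i.e. z >= cos (acos x + acos y). *)
Lemma gdist_triangle a b c :
  onS2 a -> onS2 b -> onS2 c -> gdist a c <= gdist a b + gdist b c.
Proof.
  intros Ha Hb Hc.
  pose proof (dot_bound a b Ha Hb); pose proof (dot_bound b c Hb Hc);
    pose proof (dot_bound a c Ha Hc).
  set (x := dot a b) in *; set (y := dot b c) in *; set (z := dot a c) in *.
  assert (Gram : (1 - x^2)*(1-y^2) - (z - x*y)^2 >= 0).
  { unfold onS2, x, y, z, dot in *;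
      destruct a as [a1 a2 a3], b as [b1 b2 b3], c as [c1 c2 c3]; simpl in *.
    set (det := a1*(b2*c3-b3*c2) - a2*(b1*c3-b3*c1) + a3*(b1*c2-b2*c1)).
    assert (E : (a1*a1+a2*a2+a3*a3)*(b1*b1+b2*b2+b3*b3)*(c1*c1+c2*c2+c3*c3)
      + 2*(a1*b1+a2*b2+a3*b3)*(b1*c1+b2*c2+b3*c3)*(a1*c1+a2*c2+a3*c3)
      - (a1*b1+a2*b2+a3*b3)^2*(c1*c1+c2*c2+c3*c3)
      - (b1*c1+b2*c2+b3*c3)^2*(a1*a1+a2*a2+a3*a3)
      - (a1*c1+a2*c2+a3*c3)^2*(b1*b1+b2*b2+b3*b3) = det^2) by (unfold det; ring).
    rewrite Ha, Hb, Hc in E. pose proof (pow2_ge_0 det). nra. }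
  unfold gdist; fold x y z.
  pose proof (acos_bound x); pose proof (acos_bound y); pose proof (acos_bound z).
  destruct (Rle_or_lt PI (acos x + acos y)); [lra|].
  assert (Hsum : cos (acos x + acos y) = x*y - sqrt (1-x²) * sqrt (1-y²)).
  { rewrite cos_plus, !cos_acos, !sin_acos by lra. ring. }
  assert (z >= cos (acos x + acos y)).
  { rewrite Hsum, <- sqrt_mult by (unfold Rsqr; nra).
    assert (HS : 0 <= (1-x²)*(1-y²)) by (apply Rmult_le_pos; unfold Rsqr; nra).
    pose proof (sqrt_pos ((1-x²)*(1-y²))); pose proof (sqrt_sqrt _ HS).
    unfold Rsqr in *. nra. }
  rewrite <- (acos_cos (acos x + acos y)) by lra.
  apply acos_antitone; [apply COS_bound | lra | lra].
Qed.

Lemma equator_gap i a :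
  openH i a -> exists delta, 0 < delta /\ forall e, onS1 e -> delta <= gdist a e.
Proof.
  intros [Ha Hz]. assert (Hz2 : 0 < pz a * pz a) by (destruct i; nra).
  assert (Hz3 : pz a * pz a <= 1).
  { unfold onS2, dot in Ha. pose proof (Rle_0_sqr (px a)); pose proof (Rle_0_sqr (py a)).
    unfold Rsqr in *; lra. }
  set (k := 1 - (pz a * pz a)/2).
  exists (acos k). split.
  - rewrite <- acos_1. apply acos_antitone_strict; unfold k; lra.
  - intros e [He Hez]. unfold gdist. pose proof (dot_bound a e Ha He).
    apply acos_antitone; [lra| |unfold k; lra].
    unfold onS2, dot in *; destruct a as [a1 a2 a3], e as [e1 e2 e3]; simpl in *. subst e3.
    assert (E : (a1*e1+a2*e2)^2 + (a1*e2-a2*e1)^2 = (a1*a1+a2*a2)*(e1*e1+e2*e2)) by ring.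
    replace (e1*e1+e2*e2) with 1 in E by lra. replace (a1*a1+a2*a2) with (1 - a3*a3) in E by lra.
    pose proof (pow2_ge_0 (a1*e2-a2*e1)).
    assert ((a1*e1+a2*e2+a3*0)^2 <= 1 - a3*a3) by (rewrite Rmult_0_r, Rplus_0_r; lra).
    assert (k*k >= 1 - a3*a3) by (unfold k; nra).
    assert (0 <= k) by (unfold k; nra).
    nra.
Qed.

Lemma Rmin_le_compat a b c d : a <= c -> b <= d -> Rmin a b <= Rmin c d.
Proof. intros. apply Rle_trans with (Rmin c b); [apply Rle_min_compat_r | apply Rle_min_compat_l]; auto. Qed.

Lemma Rabs_sub_between a b c : Rmin a c <= b <= Rmax a c -> Rabs (a - b) <= Rabs (a - c).
Proof. unfold Rmin, Rmax, Rabs; destruct Rle_dec; intros; repeat destruct Rcase_abs; lra. Qed.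

(** ** The equator parametrised by angles *)

Lemma acos_cos_abs x : Rabs x <= PI -> acos (cos x) = Rabs x.
Proof.
  intros H. destruct (Rle_or_lt 0 x).
  - rewrite Rabs_right in * by lra. apply acos_cos. lra.
  - rewrite Rabs_left in * by lra. rewrite <- cos_neg. apply acos_cos. lra.
Qed.

Lemma gdist_eqpt u v : gdist (eqpt u) (eqpt v) = acos (cos (u - v)).
Proof. unfold gdist, eqpt, dot; simpl. rewrite cos_minus. f_equal; ring. Qed.

Lemma gdist_eqpt_le u v : gdist (eqpt u) (eqpt v) <= Rabs (u - v).
Proof.
  rewrite gdist_eqpt. destruct (Rle_or_lt (Rabs (u - v)) PI).
  - rewrite acos_cos_abs; lra.
  - pose proof (acos_bound (cos (u - v))); lra.
Qed.

Lemma eqpt_onS1 t : onS1 (eqpt t).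
Proof.
  unfold onS1, onS2, eqpt, dot; simpl. split; [|auto].
  pose proof (sin2_cos2 t). unfold Rsqr in *. lra.
Qed.

Lemma closedH_eqpt i t : closedH i (eqpt t).
Proof. destruct (eqpt_onS1 t) as [h1 h2]. destruct i; split; auto; lra. Qed.

Lemma reduce_angle y : exists k : Z, -PI <= y - 2*PI*IZR k <= PI.
Proof.
  pose proof PI_RGT_0.
  set (z := (y + PI) / (2*PI)). destruct (archimed z) as [h1 h2].
  exists (up z - 1)%Z. rewrite minus_IZR.
  assert (Hz : y = z * (2*PI) - PI) by (unfold z; field; lra).
  split; rewrite Hz; nra.
Qed.

Lemma cos_sin_periodZ x k :
  cos (x + 2*PI*IZR k) = cos x /\ sin (x + 2*PI*IZR k) = sin x.
Proof.
  assert (Hnat : forall p, IZR (Zpos p) = INR (Pos.to_nat p))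
    by (intro p; rewrite INR_IZR_INZ, positive_nat_Z; auto).
  destruct k as [|p|p]; simpl.
  - rewrite Rmult_0_r, Rplus_0_r. auto.
  - rewrite (Hnat p).
    replace (2*PI*INR (Pos.to_nat p)) with (2*INR (Pos.to_nat p)*PI) by ring.
    split; [apply cos_period|apply sin_period].
  - rewrite IZR_NEG, (Hnat p). set (n := Pos.to_nat p).
    pose proof (cos_period (x - 2*INR n * PI) n) as Hc;
      pose proof (sin_period (x - 2*INR n * PI) n) as Hs.
    replace (x - 2*INR n*PI + 2*INR n*PI) with x in * by ring.
    replace (x + 2*PI* - INR n) with (x - 2*INR n*PI) by ring. auto.
Qed.

Lemma eqpt_periodZ x k : eqpt (x + 2*PI*IZR k) = eqpt x.
Proof. unfold eqpt. destruct (cos_sin_periodZ x k) as [-> ->]. auto. Qed.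

Lemma eqpt_period s : eqpt (s + 2*PI) = eqpt s.
Proof. replace (s + 2*PI) with (s + 2*PI*IZR 1) by (simpl; ring). apply eqpt_periodZ. Qed.

Lemma eqpt_eq_mod w t : eqpt w = eqpt t -> exists k : Z, w = t + 2*PI*IZR k.
Proof.
  intros H. assert (Hc : cos w = cos t) by (change (px (eqpt w) = px (eqpt t)); now rewrite H).
  assert (Hs : sin w = sin t) by (change (py (eqpt w) = py (eqpt t)); now rewrite H).
  destruct (reduce_angle (w - t)) as [k Hk]. exists k.
  set (y := w - t - 2*PI*IZR k) in *.
  assert (Hy : cos y = 1).
  { replace y with ((w - t) + 2*PI*IZR (-k)) by (unfold y; rewrite opp_IZR; ring).
    rewrite (proj1 (cos_sin_periodZ _ _)), cos_minus, Hc, Hs.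
    pose proof (sin2_cos2 t). unfold Rsqr in *; lra. }
  assert (Rabs y = 0).
  { rewrite <- acos_cos_abs by (apply Rabs_le; lra). rewrite Hy; apply acos_1. }
  apply Rabs_eq_0 in H0. unfold y in H0. lra.
Qed.

Lemma angle_exists p : onS1 p -> exists t, eqpt t = p.
Proof.
  intros [Hp Hz]. unfold onS2, dot in Hp. destruct p as [x y z]; simpl in *. subst z.
  assert (Hx : -1 <= x <= 1) by nra.
  assert (Hsq : sqrt (1 - x²) = Rabs y).
  { rewrite <- sqrt_Rsqr_abs. f_equal. unfold Rsqr; lra. }
  destruct (Rle_or_lt 0 y).
  - exists (acos x). unfold eqpt. rewrite cos_acos, sin_acos, Hsq, Rabs_right by lra. auto.
  - exists (- acos x). unfold eqpt.
    rewrite cos_neg, sin_neg, cos_acos, sin_acos, Hsq, Rabs_left by lra. f_equal; ring.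
Qed.

Lemma angle_in_window s t0 : exists t, s <= t <= s + 2*PI /\ eqpt t = eqpt t0.
Proof.
  destruct (reduce_angle (t0 - s - PI)) as [k Hk]. exists (t0 + 2*PI*IZR (-k)).
  split; [rewrite opp_IZR; lra | apply eqpt_periodZ].
Qed.

Lemma nearest_angle u v : exists k : Z,
  Rabs (u - (v + 2*PI*IZR k)) = gdist (eqpt u) (eqpt v).
Proof.
  rewrite gdist_eqpt. destruct (reduce_angle (u - v)) as [k Hk]. exists k.
  rewrite <- acos_cos_abs by (apply Rabs_le; lra).
  replace (u - (v + 2*PI*IZR k)) with ((u - v) + 2*PI*IZR (-k)) by (rewrite opp_IZR; ring).
  now rewrite (proj1 (cos_sin_periodZ _ _)).
Qed.

(** ** Two topological criteria on the equator *)

Definition arc_connected (F : pt -> Prop) : Prop :=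
  forall p q, F p -> F q -> exists a b, a <= b /\
     ((eqpt a = p /\ eqpt b = q) \/ (eqpt a = q /\ eqpt b = p)) /\
     forall u, a <= u <= b -> F (eqpt u).

(** An angular arc inside [F] cannot be separated by open sets covering [F]:
    a supremum argument on the set of angles whose initial arc lies in [U]. *)
Lemma arc_not_separated (F U V : pt -> Prop) a b :
  a <= b -> (forall u, a <= u <= b -> F (eqpt u)) ->
  sopen U -> sopen V -> (forall p, F p -> U p \/ V p) ->
  (forall p, F p -> U p -> V p -> False) ->
  U (eqpt a) -> V (eqpt b) -> False.
Proof.
  intros Hab HF HU HV Hcov Hdis Ua Vb.
  set (E := fun u => a <= u <= b /\ forall v, a <= v <= u -> U (eqpt v)).
  assert (Eb : bound E) by (exists b; intros u [h _]; lra).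
  assert (Ea : E a) by (split; [lra|]; intros v hv; replace v with a by lra; auto).
  destruct (completeness E Eb (ex_intro _ a Ea)) as [c [Hc1 Hc2]].
  assert (Hac : a <= c) by (apply Hc1, Ea).
  assert (Hcb : c <= b) by (apply Hc2; intros u [h _]; lra).
  assert (below_c : forall v, a <= v < c -> U (eqpt v)).
  { intros v hv. destruct (classic (exists u, E u /\ v < u)) as [[u [[_ Hu] hu]]|Hn].
    - apply Hu; lra.
    - exfalso. assert (c <= v); [|lra]. apply Hc2. intros u Eu.
      apply Rnot_lt_le. intro h. apply Hn; eauto. }
  assert (Fc : F (eqpt c)) by (apply HF; lra).
  destruct (Hcov _ Fc) as [Uc|Vc].
  - destruct (Rle_or_lt b c) as [Hbc|Hbc].
    + replace c with b in * by lra. apply (Hdis (eqpt b)); auto.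
    + destruct (HU (eqpt c) (proj1 (eqpt_onS1 c)) Uc) as [eps [Heps Heps2]].
      set (u' := Rmin b (c + eps/2)).
      assert (Hu' : c < u' <= c + eps/2) by (unfold u', Rmin; destruct Rle_dec; lra).
      assert (E u').
      { split; [unfold u', Rmin; destruct Rle_dec; lra|].
        intros v hv. destruct (Rlt_or_le v c); [apply below_c; lra|].
        apply Heps2; [apply eqpt_onS1|].
        pose proof (gdist_eqpt_le c v). rewrite Rabs_left1 in * by lra. lra. }
      assert (u' <= c) by (apply Hc1; auto). lra.
  - destruct (Rle_or_lt c a) as [Hca|Hca].
    + replace c with a in * by lra. apply (Hdis (eqpt a)); auto.
    + destruct (HV (eqpt c) (proj1 (eqpt_onS1 c)) Vc) as [eps [Heps Heps2]].
      set (u' := Rmax a (c - eps/2)).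
      assert (Hu' : a <= u' < c /\ c - eps/2 <= u') by (unfold u', Rmax; destruct Rle_dec; lra).
      apply (Hdis (eqpt u')); [apply HF; lra | apply below_c; lra|].
      apply Heps2; [apply eqpt_onS1|].
      pose proof (gdist_eqpt_le c u'). rewrite Rabs_right in * by lra. lra.
Qed.

Lemma arc_connected_connected F : arc_connected F -> sconnected F.
Proof.
  intros HA [U [V [HU [HV [Hcov [Hdis [[p [Fp Up]] [q [Fq Vq]]]]]]]]].
  destruct (HA p q Fp Fq) as [a [b [Hab [[[<- <-]|[<- <-]] HF]]]].
  - exact (arc_not_separated F U V a b Hab HF HU HV Hcov Hdis Up Vq).
  - apply (arc_not_separated F V U a b Hab HF HV HU); auto.
    + intros p' Fp'; destruct (Hcov p' Fp'); auto.
    + intros p' Fp' h1 h2; eapply Hdis; eauto.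
Qed.

Definition angle_closed (F : pt -> Prop) : Prop :=
  forall t, ~ F (eqpt t) ->
    exists eta, 0 < eta /\ forall s, Rabs (s - t) < eta -> ~ F (eqpt s).

(** The angles in [-PI, PI] of an angle-closed set form a compact set of
    reals: a closed subset of a compact interval. *)
Lemma angles_compact (F : pt -> Prop) :
  angle_closed F -> compact (fun t => -PI <= t <= PI /\ F (eqpt t)).
Proof.
  intros Hcl.
  apply compact_P4 with (fun t => -PI <= t <= PI); [apply compact_P3| |intros t [h _]; auto].
  intros x Hx. unfold complementary in Hx.
  destruct (Rlt_or_le x (-PI)) as [h1|h1].
  { exists (mkposreal (-PI - x) ltac:(lra)). intros y Hy. unfold disc in Hy; simpl in Hy.
    unfold complementary. intros [[h3 _] _]. apply Rabs_def2 in Hy. lra. }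
  destruct (Rlt_or_le PI x) as [h2|h2].
  { exists (mkposreal (x - PI) ltac:(lra)). intros y Hy. unfold disc in Hy; simpl in Hy.
    unfold complementary. intros [[_ h3] _]. apply Rabs_def2 in Hy. lra. }
  destruct (Hcl x (fun h => Hx (conj (conj h1 h2) h))) as [eta [Heta Heta2]].
  exists (mkposreal eta Heta). intros y Hy. unfold disc in Hy; simpl in Hy.
  unfold complementary. intros [_ h]. apply (Heta2 y Hy h).
Qed.

(** A subset of the equator which is closed in the angle is compact: an open
    cover pulls back, along a choice of covering set for each angle, to an
    open cover of its compact set of angles. *)
Lemma angle_closed_compact (F : pt -> Prop) :
  (forall p, F p -> onS1 p) -> angle_closed F -> scompact F.
Proof.
  intros HS1 Hcl. split; [intros p Fp; apply HS1; auto|].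
  intros I U HU Hcov.
  destruct (classic (exists p, F p)) as [[p0 Fp0]|Hemp].
  2:{ exists nil. intros p Fp; exfalso; eauto. }
  destruct (Hcov p0 Fp0) as [j0 _].
  set (T := fun t => -PI <= t <= PI /\ F (eqpt t)).
  assert (Hj : exists jf : R -> I, forall t, T t -> U (jf t) (eqpt t)).
  { assert (H : forall t, exists j, T t -> U j (eqpt t)).
    { intros t. destruct (classic (T t)) as [h|h].
      - destruct (Hcov _ (proj2 h)) as [j Hj]; eauto.
      - exists j0; tauto. }
    exists (fun t => proj1_sig (constructive_indefinite_description _ (H t))).
    intros t. exact (proj2_sig (constructive_indefinite_description _ (H t))). }
  destruct Hj as [jf Hjf].
  assert (cf : forall x, (exists y, T x /\ U (jf x) (eqpt y)) -> T x)
    by (intros x [y [h _]]; auto).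
  set (fam := mkfamily T (fun x y => T x /\ U (jf x) (eqpt y)) cf).
  assert (Hco : covering_open_set T fam).
  { split.
    - intros x Tx. exists x. simpl. split; auto.
    - intros x y [Tx Uy]. destruct (HU (jf x) (eqpt y) (proj1 (eqpt_onS1 y)) Uy)
        as [eps [Heps Heps2]].
      exists (mkposreal eps Heps). intros z Hz. unfold disc in Hz; simpl in Hz. split; auto.
      apply Heps2; [apply eqpt_onS1|]. pose proof (gdist_eqpt_le y z) as Hyz.
      rewrite Rabs_minus_sym in Hyz. lra. }
  destruct (angles_compact F Hcl fam Hco) as [D [Hcv [l Hl]]].
  exists (map jf l). intros p Fp.
  destruct (angle_exists p (HS1 p Fp)) as [t0 Ht0].
  destruct (reduce_angle t0) as [k Hk].
  set (t := t0 - 2*PI*IZR k).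
  assert (Ht : eqpt t = p).
  { replace t with (t0 + 2*PI*IZR (-k)) by (unfold t; rewrite opp_IZR; ring).
    now rewrite eqpt_periodZ. }
  destruct (Hcv t) as [y [[Ty Uy] Dy]]; [split; [unfold t; lra | rewrite Ht; auto]|].
  exists (jf y). split; [apply in_map, Hl; split; auto | rewrite <- Ht; auto].
Qed.

Lemma singleton_compact_connected (F : pt -> Prop) a :
  onS2 a -> F a -> (forall b, F b -> b = a) -> scompact F /\ sconnected F.
Proof.
  intros Ha Fa Hs. split.
  - split; [intros p Fp; rewrite (Hs p Fp); auto|].
    intros I U HU Hcov. destruct (Hcov a Fa) as [j Hj]. exists (j :: nil).
    intros p Fp. rewrite (Hs p Fp). exists j; split; [now left | auto].
  - intros [U [V [HU [HV [Hcov [Hdis [[p [Fp Up]] [q [Fq Vq]]]]]]]]].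
    rewrite (Hs p Fp) in Up. rewrite (Hs q Fq) in Vq. exact (Hdis a Fa Up Vq).
Qed.

(** ** Chains and the pseudo-distance [dZ] *)

Section Gluing.

Variables g ginv : pt -> pt.
Hypothesis Hhomeo : circle_homeo g ginv.

Lemma Dfun_not_minfty x y : Dfun g x y <> m_infty.
Proof. unfold Dfun; destruct x, y; repeat destruct Req_EM_T; discriminate. Qed.

Lemma Dfun_sym x y : Dfun g x y = Dfun g y x.
Proof.
  unfold Dfun; destruct x as [a|a], y as [b|b]; repeat destruct Req_EM_T;
    try congruence; rewrite ?(gdist_sym a b), ?(gdist_sym (g a) (g b)),
    ?(gdist_sym (g a) b), ?(gdist_sym a (g b)); reflexivity.
Qed.

Lemma Dfun_nonneg x y d : Dfun g x y = Finite d -> 0 <= d.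
Proof.
  unfold Dfun; destruct x, y; repeat destruct Req_EM_T; intro H; inversion H; subst;
    try apply gdist_nonneg; apply Rmin_glb; apply gdist_nonneg.
Qed.

Lemma Dfun_SS_equator a b : pz a = 0 -> pz b = 0 ->
  Dfun g (zS a) (zS b) = Finite (Rmin (gdist a b) (gdist (g a) (g b))).
Proof. intros; unfold Dfun; repeat destruct Req_EM_T; congruence. Qed.
Lemma Dfun_SS_offl a b : pz a <> 0 -> Dfun g (zS a) (zS b) = Finite (gdist a b).
Proof. intros; unfold Dfun; repeat destruct Req_EM_T; congruence. Qed.
Lemma Dfun_SS_offr a b : pz b <> 0 -> Dfun g (zS a) (zS b) = Finite (gdist a b).
Proof. intros; unfold Dfun; repeat destruct Req_EM_T; congruence. Qed.
Lemma Dfun_SN_equator a b : pz a = 0 -> Dfun g (zS a) (zN b) = Finite (gdist (g a) b).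
Proof. intros; unfold Dfun; repeat destruct Req_EM_T; congruence. Qed.
Lemma Dfun_SN_off a b : pz a <> 0 -> Dfun g (zS a) (zN b) = p_infty.
Proof. intros; unfold Dfun; repeat destruct Req_EM_T; congruence. Qed.
Lemma Dfun_NS_equator a b : pz b = 0 -> Dfun g (zN a) (zS b) = Finite (gdist a (g b)).
Proof. intros; unfold Dfun; repeat destruct Req_EM_T; congruence. Qed.
Lemma Dfun_NS_off a b : pz b <> 0 -> Dfun g (zN a) (zS b) = p_infty.
Proof. intros; unfold Dfun; repeat destruct Req_EM_T; congruence. Qed.

Lemma chain_cost_not_minfty x l y : chain_cost g x l y <> m_infty.
Proof.
  revert x; induction l as [|z l IH]; intros x; simpl; [apply Dfun_not_minfty|].
  pose proof (Dfun_not_minfty x z); pose proof (IH z).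
  destruct (Dfun g x z), (chain_cost g z l y); simpl; congruence.
Qed.

Lemma chain_cost_cons x z l y r : chain_cost g x (z :: l) y = Finite r ->
  exists d r', Dfun g x z = Finite d /\ chain_cost g z l y = Finite r' /\ r = d + r'.
Proof.
  simpl. pose proof (Dfun_not_minfty x z) as H1; pose proof (chain_cost_not_minfty z l y) as H2.
  destruct (Dfun g x z), (chain_cost g z l y); simpl; intro H; try congruence.
  inversion H; eauto.
Qed.

Definition reach x y r := exists l, List.Forall inZ l /\ chain_cost g x l y = Finite r.

Lemma reach_nonneg x y r : reach x y r -> 0 <= r.
Proof.
  intros [l [_ H]]. revert x r H; induction l as [|z l IH]; intros x r H.
  - eapply Dfun_nonneg; eauto.
  - apply chain_cost_cons in H. destruct H as (d&r'&H1&H2&->).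
    pose proof (Dfun_nonneg _ _ _ H1). pose proof (IH _ _ H2). lra.
Qed.

Lemma reach_one x y d : Dfun g x y = Finite d -> reach x y d.
Proof. intros; exists nil; split; auto. Qed.

Lemma reach_cons x z y d r :
  Dfun g x z = Finite d -> inZ z -> reach z y r -> reach x y (d + r).
Proof.
  intros H1 H2 [l [Hl H3]]. exists (z :: l); split; [constructor; auto|].
  simpl. rewrite H1, H3. reflexivity.
Qed.

Lemma reach_app x z y r1 r2 : reach x z r1 -> inZ z -> reach z y r2 -> reach x y (r1 + r2).
Proof.
  intros [l [Hl H]] Hz H2. revert x r1 H; induction l as [|w l IH]; intros x r1 H.
  - now apply reach_cons with z.
  - apply chain_cost_cons in H. destruct H as (d&r'&H1&H3&->). inversion Hl; subst.
    replace (d + r' + r2) with (d + (r' + r2)) by ring.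
    apply reach_cons with w; auto.
Qed.

Lemma reach_sym x y r : reach x y r -> reach y x r.
Proof.
  intros [l [Hl H]]. revert x r H; induction l as [|z l IH]; intros x r H.
  - apply reach_one. now rewrite Dfun_sym.
  - apply chain_cost_cons in H. destruct H as (d&r'&H1&H3&->). inversion Hl; subst.
    rewrite Rplus_comm. apply reach_app with z; auto.
    apply reach_one. now rewrite Dfun_sym.
Qed.

Lemma dZ_le_reach x y r : reach x y r -> Rbar_le (dZ g x y) (Finite r).
Proof. intros H. apply (proj1 (Glb_Rbar_correct _)). exact H. Qed.

Lemma dZ_ge_lower x y m : (forall r, reach x y r -> m <= r) -> Rbar_le (Finite m) (dZ g x y).
Proof. intros H. apply (proj2 (Glb_Rbar_correct _)). exact H. Qed.

(** [x] and [y] are identified in the quotient Z~: arbitrarily cheap chains. *)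
Definition dZ_null x y := forall eta, 0 < eta -> exists r, reach x y r /\ r < eta.

Lemma dZ_zero_iff x y : dZ g x y = Finite 0 <-> dZ_null x y.
Proof.
  split.
  - intros H eta Heta. apply NNPP; intro Hn.
    assert (Hge : Rbar_le (Finite eta) (dZ g x y)).
    { apply dZ_ge_lower. intros r Hr. apply Rnot_lt_le. intro h. apply Hn; eauto. }
    rewrite H in Hge; simpl in Hge; lra.
  - intros H. apply Rbar_le_antisym; [|apply dZ_ge_lower, reach_nonneg].
    destruct (H 1 ltac:(lra)) as [r1 [Hr1 _]]. pose proof (dZ_le_reach _ _ _ Hr1) as Hle.
    destruct (dZ g x y) as [d| |] eqn:E; simpl in *; auto.
    apply Rnot_lt_le; intro h. destruct (H d h) as [r' [Hr Hr']].
    pose proof (dZ_le_reach _ _ _ Hr) as Hd. rewrite E in Hd; simpl in Hd; lra.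
Qed.

Lemma dZ_null_sym x y : dZ_null x y -> dZ_null y x.
Proof.
  intros H eta he. destruct (H eta he) as [r [h1 h2]]. exists r; split; auto.
  now apply reach_sym.
Qed.

Lemma dZ_null_trans x y z : dZ_null x y -> inZ y -> dZ_null y z -> dZ_null x z.
Proof.
  intros H1 Hy H2 eta he. destruct (H1 (eta/2)) as [r1 [h1 h2]]; [lra|].
  destruct (H2 (eta/2)) as [r2 [h3 h4]]; [lra|].
  exists (r1 + r2). split; [eapply reach_app; eauto | lra].
Qed.

Lemma fibre_iff i x a :
  tilde_preimage g ginv i x a <-> closedH i a /\ dZ_null (iotaZ ginv i a) x.
Proof. unfold tilde_preimage. now rewrite dZ_zero_iff. Qed.

Definition iota_open (i : hemi) c := match i with south => zS c | north => zN c end.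

Lemma iotaZ_open i a : openH i a -> iotaZ ginv i a = iota_open i a.
Proof. destruct i; simpl; auto. intros [_ h]. destruct Req_EM_T; auto. lra. Qed.

Lemma iota_open_inZ i c : openH i c -> inZ (iota_open i c).
Proof. destruct i; simpl; intros [h1 h2]; split; auto; lra. Qed.

Lemma iotaZ_north_equator p : onS1 p -> iotaZ ginv north p = zS (ginv p).
Proof. intros [_ h]; simpl; destruct Req_EM_T; congruence. Qed.

Lemma iotaZ_inZ i a : closedH i a -> inZ (iotaZ ginv i a).
Proof.
  intros [Ha Hz]. destruct i; simpl; [split; auto|].
  destruct Req_EM_T as [e|e].
  - destruct (proj1 Hhomeo a (conj Ha e)) as (_&[h1 h2]&_). split; auto; lra.
  - split; auto; lra.
Qed.

Lemma equator_inZ p : onS1 p -> inZ (zS p).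
Proof. intros [h1 h2]; simpl; split; auto; lra. Qed.

(** One step of [D] between images of iota_i costs at most the spherical
    distance (on the equator of Z_2, [D] sees [gdist (g (ginv a)) _]). *)
Lemma Dfun_iotaZ_le i a b : closedH i a -> closedH i b ->
  exists d, Dfun g (iotaZ ginv i a) (iotaZ ginv i b) = Finite d /\ d <= gdist a b.
Proof.
  intros [Ha Hza] [Hb Hzb]. destruct i; unfold iotaZ;
    destruct (Req_EM_T (pz a) 0) as [ea|ea]; destruct (Req_EM_T (pz b) 0) as [eb|eb].
  - rewrite Dfun_SS_equator by auto. eexists; split; eauto. apply Rmin_l.
  - rewrite Dfun_SS_offr by auto. eauto with real.
  - rewrite Dfun_SS_offl by auto. eauto with real.
  - rewrite Dfun_SS_offl by auto. eauto with real.
  - destruct (proj1 Hhomeo a (conj Ha ea)) as (_&[_ h1]&_&h2).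
    destruct (proj1 Hhomeo b (conj Hb eb)) as (_&[_ h3]&_&h4).
    rewrite Dfun_SS_equator, h2, h4 by auto. eexists; split; eauto. apply Rmin_r.
  - destruct (proj1 Hhomeo a (conj Ha ea)) as (_&[_ h1]&_&h2).
    rewrite Dfun_SN_equator, h2 by auto. eauto with real.
  - destruct (proj1 Hhomeo b (conj Hb eb)) as (_&[_ h3]&_&h4).
    rewrite Dfun_NS_equator, h4 by auto. eauto with real.
  - exists (gdist a b); split; [reflexivity | lra].
Qed.

Lemma iotaZ_lipschitz i a b : closedH i a -> closedH i b ->
  Rbar_le (dZ g (iotaZ ginv i a) (iotaZ ginv i b)) (Finite (gdist a b)).
Proof.
  intros Ha Hb. destruct (Dfun_iotaZ_le i a b Ha Hb) as [d [H1 H2]].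
  apply (Rbar_le_trans _ (Finite d)); [apply dZ_le_reach, reach_one; auto | simpl; auto].
Qed.

Lemma exit_lemma i l b y r : openH i b -> List.Forall inZ l -> inZ y ->
  chain_cost g (iota_open i b) l y = Finite r ->
  (exists e, onS1 e /\ gdist b e <= r) \/
  (exists c, openH i c /\ y = iota_open i c /\ gdist b c <= r).
Proof.
  assert (one_step : forall p z d r', openH i p -> inZ z -> 0 <= r' ->
    Dfun g (iota_open i p) z = Finite d ->
    (exists e, onS1 e /\ gdist p e <= d + r') \/
    (exists c, openH i c /\ z = iota_open i c /\ gdist p c <= d)).
  { intros p z d r' [Hp Hpz] Hz Hr' Hd.
    destruct i, z as [c|c]; cbn [iota_open inZ openH closedH] in *.
    - destruct Hz as [Hc Hcz]. rewrite Dfun_SS_offl in Hd by lra. inversion Hd; subst.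
      destruct (Req_dec (pz c) 0).
      + left; exists c; split; [split; auto | lra].
      + right; exists c; repeat split; auto; lra.
    - rewrite Dfun_SN_off in Hd by lra. discriminate.
    - destruct Hz as [Hc Hcz]. destruct (Req_dec (pz c) 0).
      + rewrite Dfun_NS_equator in Hd by auto. inversion Hd; subst.
        left; exists (g c). split; [apply (proj1 Hhomeo c); split; auto | lra].
      + rewrite Dfun_NS_off in Hd by auto. discriminate.
    - inversion Hd; subst. destruct Hz.
      right; exists c; repeat split; auto; lra. }
  revert b r. induction l as [|z l IH]; intros b r Hb Hl Hy Hc.
  - destruct (one_step b y r 0 Hb Hy (Rle_refl 0) Hc) as [(e&He&Hbe)|(c&Hc'&->&Hbc)].
    + left; exists e; split; auto; lra.
    + right; exists c; auto.
  - apply chain_cost_cons in Hc. destruct Hc as (d&r'&H1&H2&->). inversion Hl; subst.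
    assert (Hr' : 0 <= r') by (apply (reach_nonneg z y); exists l; auto).
    destruct (one_step b z d r' Hb H3 Hr' H1) as [Hexit|(c&Hc&->&Hbc)]; [left; auto|].
    destruct (IH c r' Hc H4 Hy H2) as [(e&He&Hce)|(c'&Hc'&->&Hcc')].
    + left; exists e; split; auto.
      pose proof (gdist_triangle b c e (proj1 Hb) (proj1 Hc) (proj1 He)). lra.
    + right; exists c'; split; [|split]; auto.
      pose proof (gdist_triangle b c c' (proj1 Hb) (proj1 Hc) (proj1 Hc')). lra.
Qed.

(** Local isometry: within a third of the distance from [a] to the equator,
    a cheaper chain would have to cross the equator, which costs too much. *)
Lemma iotaZ_local_isometry i a : openH i a -> exists eps, 0 < eps /\
  forall b c, openH i b -> openH i c -> gdist a b < eps -> gdist a c < eps ->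
    dZ g (iotaZ ginv i b) (iotaZ ginv i c) = Finite (gdist b c).
Proof.
  intros Ha. destruct (equator_gap i a Ha) as [delta [Hdelta Hgap]].
  exists (delta/3). split; [lra|]. intros b c Hb Hc Hab Hac.
  rewrite !iotaZ_open by auto.
  apply Rbar_le_antisym.
  - apply dZ_le_reach, reach_one. destruct i; cbn [iota_open].
    + apply Dfun_SS_offl. destruct Hb; lra.
    + reflexivity.
  - apply dZ_ge_lower. intros r [l [Hl Hcost]].
    destruct (exit_lemma i l b (iota_open i c) r Hb Hl (iota_open_inZ i c Hc) Hcost)
      as [(e&He&Hbe)|(c'&Hc'&Heq&Hbc')].
    + pose proof (Hgap e He).
      pose proof (gdist_triangle a b e (proj1 Ha) (proj1 Hb) (proj1 He)).
      pose proof (gdist_triangle b a c (proj1 Hb) (proj1 Ha) (proj1 Hc)).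
      rewrite (gdist_sym b a) in *. lra.
    + replace c' with c in * by (destruct i; simpl in Heq; congruence). auto.
Qed.

(** The class of an interior point [a] meets the closed hemisphere only in
    [a]: a null chain would be cheaper than the gap to the equator and than
    [gdist a b]. *)
Lemma fibre_interior_unique i x a : inZ x -> openH i a ->
  tilde_preimage g ginv i x a -> forall b, tilde_preimage g ginv i x b -> b = a.
Proof.
  intros Hx Ha Fa b Fb. apply fibre_iff in Fa; apply fibre_iff in Fb.
  destruct Fa as [_ Na]; destruct Fb as [Cb Nb].
  apply NNPP; intro Hne.
  destruct (equator_gap i a Ha) as [delta [Hdelta Hgap]].
  assert (Hab : 0 < gdist a b).
  { destruct (gdist_nonneg a b) as [h|h]; auto. exfalso; apply Hne.
    symmetry; apply gdist_eq0; auto; [apply Ha | apply Cb]. }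
  assert (Nab : dZ_null (iotaZ ginv i a) (iotaZ ginv i b))
    by (apply dZ_null_trans with x; auto; apply dZ_null_sym; auto).
  destruct (Nab (Rmin delta (gdist a b))) as [r [[l [Hl Hcost]] Hr]];
    [apply Rmin_glb_lt; auto|].
  rewrite iotaZ_open in Hcost by auto.
  pose proof (Rmin_l delta (gdist a b)); pose proof (Rmin_r delta (gdist a b)).
  destruct (exit_lemma i l a _ r Ha Hl (iotaZ_inZ i b Cb) Hcost)
    as [(e&He&Hae)|(c&Hc&Heq&Hac)].
  - pose proof (Hgap e He). lra.
  - assert (b = c) by (destruct i; simpl in Heq; [congruence|destruct Req_EM_T; congruence]).
    subst. lra.
Qed.

(** Fibres are closed along the equator: a chain costs little between
    nearby equator points. *)
Lemma fibre_angle_closed i x : angle_closed (tilde_preimage g ginv i x).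
Proof.
  intros t Ft. rewrite fibre_iff in Ft.
  assert (Hn : ~ dZ_null (iotaZ ginv i (eqpt t)) x)
    by (intro h; apply Ft; split; [apply closedH_eqpt | exact h]).
  apply not_all_ex_not in Hn. destruct Hn as [eta Hn].
  apply imply_to_and in Hn. destruct Hn as [Heta Hn].
  exists (eta/2). split; [lra|]. intros s Hs Fs. apply fibre_iff in Fs.
  destruct Fs as [_ Ns]. destruct (Ns (eta/2)) as [r [Hr1 Hr2]]; [lra|].
  destruct (Dfun_iotaZ_le i (eqpt t) (eqpt s) (closedH_eqpt i t) (closedH_eqpt i s))
    as [d [Hd1 Hd2]].
  pose proof (gdist_eqpt_le t s) as Hts. rewrite Rabs_minus_sym in Hts.
  apply Hn. exists (d + r). split; [|lra].
  apply reach_cons with (iotaZ ginv i (eqpt s)); auto.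
  apply iotaZ_inZ, closedH_eqpt.
Qed.

(** ** Sweeping arcs of the equator *)

Section Lift.

Variable G : R -> R.
Hypothesis G_incr : forall s t, s < t -> G s < G t.
Hypothesis G_period : forall t, G (t + 2 * PI) = G t + 2 * PI.
Hypothesis G_lifts : forall t, g (eqpt t) = eqpt (G t).

Lemma G_mono s t : s <= t -> G s <= G t.
Proof. intros [h|<-]; [left; auto | lra]. Qed.

Lemma G_periodZ t k : G (t + 2*PI*IZR k) = G t + 2*PI*IZR k.
Proof.
  assert (Hn : forall n t, G (t + 2*PI*INR n) = G t + 2*PI*INR n).
  { induction n as [|n IH]; intros t'; [simpl; rewrite !Rmult_0_r, !Rplus_0_r; auto|].
    rewrite S_INR. replace (t' + 2*PI*(INR n + 1)) with ((t' + 2*PI*INR n) + 2*PI) by ring.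
    rewrite G_period, IH. ring. }
  assert (Hnat : forall p, IZR (Zpos p) = INR (Pos.to_nat p))
    by (intro p; rewrite INR_IZR_INZ, positive_nat_Z; auto).
  destruct k as [|p|p].
  - simpl. rewrite !Rmult_0_r, !Rplus_0_r; auto.
  - rewrite (Hnat p). apply Hn.
  - rewrite IZR_NEG, (Hnat p). set (n := Pos.to_nat p).
    pose proof (Hn n (t + 2*PI*-INR n)) as H.
    replace (t + 2*PI*-INR n + 2*PI*INR n) with t in H by ring. lra.
Qed.

(** [G] is onto, since [g] is onto the equator. *)
Lemma G_surj v : exists w, G w = v.
Proof.
  destruct (proj1 Hhomeo (eqpt v) (eqpt_onS1 v)) as (_&Hinv&_&Hback).
  destruct (angle_exists _ Hinv) as [w0 Hw0].
  assert (Hw : eqpt (G w0) = eqpt v) by (rewrite <- G_lifts, Hw0; auto).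
  destruct (eqpt_eq_mod _ _ Hw) as [k Hk].
  exists (w0 + 2*PI*IZR (-k)). rewrite G_periodZ, Hk, opp_IZR. ring.
Qed.

Definition Deq p q := Rmin (gdist p q) (gdist (g p) (g q)).
Definition Dlift u w := Rmin (Rabs (u - w)) (Rabs (G u - G w)).

Lemma Dfun_equator p q : onS1 p -> onS1 q -> Dfun g (zS p) (zS q) = Finite (Deq p q).
Proof. intros [_ hp] [_ hq]. now apply Dfun_SS_equator. Qed.

Lemma Deq_le_Dlift u v : Deq (eqpt u) (eqpt v) <= Dlift u v.
Proof. unfold Deq, Dlift. rewrite !G_lifts. apply Rmin_le_compat; apply gdist_eqpt_le. Qed.

Lemma Dlift_realized u p1 : onS1 p1 ->
  exists w1, eqpt w1 = p1 /\ Dlift u w1 <= Deq (eqpt u) p1.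
Proof.
  intros Hp1. destruct (angle_exists p1 Hp1) as [v <-].
  unfold Deq, Dlift. rewrite !G_lifts.
  destruct (Rle_or_lt (gdist (eqpt u) (eqpt v)) (gdist (eqpt (G u)) (eqpt (G v)))).
  - destruct (nearest_angle u v) as [k Hk]. exists (v + 2*PI*IZR k).
    split; [apply eqpt_periodZ|]. rewrite (Rmin_left (gdist _ _)) by lra. rewrite <- Hk. apply Rmin_l.
  - destruct (nearest_angle (G u) (G v)) as [k Hk]. exists (v + 2*PI*IZR k).
    split; [apply eqpt_periodZ|]. rewrite (Rmin_right (gdist _ _)) by lra.
    rewrite G_periodZ, <- Hk. apply Rmin_r.
Qed.

(** Because [G] is increasing, [Dlift u] grows along any interval from [u]:
    this is where orientation preservation is used. *)
Lemma Dlift_mono u w v : Rmin u w <= v <= Rmax u w -> Dlift u v <= Dlift u w.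
Proof.
  intros Hv. unfold Dlift. apply Rmin_le_compat; apply Rabs_sub_between; auto.
  destruct (Rle_dec u w) as [h|h].
  - rewrite Rmin_left, Rmax_right in Hv by lra.
    rewrite Rmin_left, Rmax_right by (apply G_mono; lra). split; apply G_mono; lra.
  - rewrite Rmin_right, Rmax_left in Hv by lra.
    rewrite Rmin_right, Rmax_left by (apply G_mono; lra). split; apply G_mono; lra.
Qed.

Definition sweeps q p r := forall u, eqpt u = p -> exists w, eqpt w = q /\
  forall v, Rmin u w <= v <= Rmax u w ->
    exists r', r' <= r /\ reach (zS p) (zS (eqpt v)) r'.

Lemma sweeps_refl q : onS1 q -> sweeps q q 0.
Proof.
  intros Hq u Hu. exists u; split; auto. intros v Hv.
  replace v with u by (revert Hv; unfold Rmin, Rmax; destruct Rle_dec; intros; lra).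
  exists 0; split; [lra|]. rewrite Hu. apply reach_one.
  rewrite Dfun_equator by auto. unfold Deq.
  rewrite !gdist_self by (apply Hq || apply (proj1 Hhomeo q Hq)). now rewrite Rmin_left by lra.
Qed.

(** Prepending one equator step to a sweep: angles between [u] and a
    [Dlift]-optimal angle [w1] of [p1] are reached directly from [p]
    (by [Dlift_mono]), the others through [p1]. *)
Lemma sweeps_step q p p1 d r : onS1 p -> onS1 p1 ->
  Deq p p1 <= d -> sweeps q p1 r -> sweeps q p (d + r).
Proof.
  intros Hp Hp1 Hd Hsw u Hu.
  destruct (Dlift_realized u p1 Hp1) as [w1 [Hw1 Hl]]. rewrite Hu in Hl.
  destruct (Hsw w1 Hw1) as [w [Hw Hsw1]]. exists w; split; auto.
  assert (Hr : 0 <= r).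
  { destruct (Hsw1 w1) as [r0 [h1 h2]]; [unfold Rmin, Rmax; destruct Rle_dec; lra|].
    apply reach_nonneg in h2; lra. }
  intros v Hv.
  destruct (classic (Rmin u w1 <= v <= Rmax u w1)) as [Hnear|Hfar].
  - exists (Deq p (eqpt v)). split.
    + pose proof (Dlift_mono u w1 v Hnear). pose proof (Deq_le_Dlift u v) as Huv.
      rewrite Hu in Huv. lra.
    + apply reach_one, Dfun_equator; auto. apply eqpt_onS1.
  - destruct (Hsw1 v) as [r0 [h1 h2]].
    { revert Hfar Hv. unfold Rmin, Rmax; repeat destruct Rle_dec; intros; lra. }
    exists (Deq p p1 + r0). split; [lra|].
    apply reach_cons with (zS p1); auto; [apply Dfun_equator | apply equator_inZ]; auto.
Qed.

(** [enters q dist_to r]: a chain of cost [r] towards [q] first touches the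
    equator at some [p1], with [dist_to p1] bounded by the cost [c] spent
    so far, and then sweeps with the remaining budget. *)
Definition enters q (dist_to : pt -> R) r :=
  exists p1 c, onS1 p1 /\ dist_to p1 <= c /\ sweeps q p1 (r - c).

Lemma enters_at q f c d r : onS1 c -> f c <= d -> sweeps q c r -> enters q f (d + r).
Proof.
  intros Hc Hf Hsw. exists c, d. split; [|split]; auto.
  now replace (d + r - d) with r by ring.
Qed.

Lemma enters_weaken q f f' d r :
  (forall p1, onS1 p1 -> f p1 <= d + f' p1) -> enters q f' r -> enters q f (d + r).
Proof.
  intros Hf (p1&c&Hp1&Hc&Hsw). exists p1, (d + c). split; [|split]; auto.
  - pose proof (Hf p1 Hp1). lra.
  - now replace (d + r - (d + c)) with (r - c) by ring.
Qed.

Lemma sweeps_of_enters q p f d r : onS1 p ->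
  (forall p1, onS1 p1 -> Deq p p1 <= d + f p1) -> enters q f r -> sweeps q p (d + r).
Proof.
  intros Hp Hf (p1&c&Hp1&Hc&Hsw).
  replace (d + r) with ((d + c) + (r - c)) by ring.
  apply sweeps_step with p1; auto. pose proof (Hf p1 Hp1). lra.
Qed.

(** What a chain of cost [r] from [x] to the equator point [q] guarantees. *)
Definition chain_invariant q x r : Prop :=
  match x with
  | zS p => (pz p = 0 -> sweeps q p r) /\ (pz p <> 0 -> enters q (gdist p) r)
  | zN b => enters q (fun p1 => gdist b (g p1)) r
  end.

Lemma chain_invariant_step q x z d r : inZ x -> inZ z ->
  Dfun g x z = Finite d -> chain_invariant q z r -> chain_invariant q x (d + r).
Proof.
  intros Hx Hz Hd Hinv.
  assert (Hg1 : forall p, onS1 p -> onS2 (g p)) by (intros p Hp; apply (proj1 Hhomeo p Hp)).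
  destruct x as [p|b], z as [c|c]; cbn [inZ openH closedH chain_invariant] in *;
    destruct Hx as [Hx Hxz]; destruct Hz as [Hz Hzz].
  - destruct Hinv as [Hinv_eq Hinv_off]. split; intro hp.
    + destruct (Req_dec (pz c) 0) as [hc|hc].
      * rewrite Dfun_SS_equator in Hd by auto. inversion Hd; subst d.
        apply sweeps_step with c; [split | split | apply Rle_refl | ]; auto.
      * rewrite Dfun_SS_offr in Hd by auto. inversion Hd; subst d.
        apply sweeps_of_enters with (gdist c); [split; auto | | auto].
        intros p1 Hp1. pose proof (Rmin_l (gdist p p1) (gdist (g p) (g p1))).
        pose proof (gdist_triangle p c p1 Hx Hz (proj1 Hp1)). unfold Deq. lra.
    + rewrite Dfun_SS_offl in Hd by auto. inversion Hd; subst d.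
      destruct (Req_dec (pz c) 0) as [hc|hc].
      * apply enters_at with c; [split | lra | ]; auto.
      * apply (enters_weaken q _ (gdist c)); auto.
        intros p1 Hp1. apply gdist_triangle; auto. apply Hp1.
  - split; intro hp.
    + rewrite Dfun_SN_equator in Hd by auto. inversion Hd; subst d.
      apply sweeps_of_enters with (fun p1 => gdist c (g p1)); [split; auto | | exact Hinv].
      intros p1 Hp1. pose proof (Rmin_r (gdist p p1) (gdist (g p) (g p1))).
      pose proof (gdist_triangle (g p) c (g p1) (Hg1 p (conj Hx hp)) Hz (Hg1 p1 Hp1)).
      unfold Deq. lra.
    + rewrite Dfun_SN_off in Hd by auto. discriminate.
  - destruct (Req_dec (pz c) 0) as [hc|hc].
    + rewrite Dfun_NS_equator in Hd by auto. inversion Hd; subst d.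
      apply enters_at with c; [split; auto|lra|apply Hinv; auto].
    + rewrite Dfun_NS_off in Hd by auto. discriminate.
  - inversion Hd; subst d. apply (enters_weaken q _ (fun p1 => gdist c (g p1))); auto.
    intros p1 Hp1. apply gdist_triangle; auto.
Qed.

Lemma chain_invariant_of_chain q l x r : onS1 q -> List.Forall inZ l -> inZ x ->
  chain_cost g x l (zS q) = Finite r -> chain_invariant q x r.
Proof.
  intros Hq. revert x r. induction l as [|z l IH]; intros x r Hl Hx Hc.
  - replace r with (r + 0) by ring. apply chain_invariant_step with (zS q); auto.
    + apply equator_inZ; auto.
    + split; [intros _; apply sweeps_refl; auto | intros h; exfalso; apply h, Hq].
  - apply chain_cost_cons in Hc. destruct Hc as (d&r'&H1&H2&->). inversion Hl; subst.
    apply chain_invariant_step with z; auto.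
Qed.

(** Each cheap chain sweeps
    one of the two arcs (according to the sign of the winding of the angle
    it ends at), and one of the two choices recurs for all costs. *)
Lemma null_class_arc s t : s <= t <= s + 2*PI ->
  dZ_null (zS (eqpt s)) (zS (eqpt t)) ->
  (forall u, s <= u <= t -> dZ_null (zS (eqpt s)) (zS (eqpt u))) \/
  (forall u, t <= u <= s + 2*PI -> dZ_null (zS (eqpt s)) (zS (eqpt u))).
Proof.
  intros Hst Hnull. pose proof PI_RGT_0.
  set (cheap eta u := exists r, reach (zS (eqpt s)) (zS (eqpt u)) r /\ r < eta).
  assert (cover : forall eta, 0 < eta ->
    (forall u, s <= u <= t -> cheap eta u) \/ (forall u, t <= u <= s + 2*PI -> cheap eta u)).
  { intros eta Heta. destruct (Hnull eta Heta) as [r [[l [Hl Hc]] Hr]].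
    destruct (chain_invariant_of_chain (eqpt t) l (zS (eqpt s)) r (eqpt_onS1 t) Hl
                (equator_inZ _ (eqpt_onS1 s)) Hc) as [Hsw _].
    destruct (Hsw eq_refl s eq_refl) as [w [Hw Hcov]].
    destruct (eqpt_eq_mod _ _ Hw) as [k ->].
    destruct (Z_le_gt_dec 0 k) as [hk|hk]; [left|right]; intros u Hu.
    - apply IZR_le in hk. destruct (Hcov u) as [r' [h1 h2]];
        [unfold Rmin, Rmax; destruct Rle_dec; nra|].
      exists r'; split; auto; lra.
    - assert (hk' : IZR k <= -1) by (apply IZR_le; lia).
      destruct (Hcov (u - 2*PI)) as [r' [h1 h2]]; [unfold Rmin, Rmax; destruct Rle_dec; nra|].
      replace (eqpt (u - 2*PI)) with (eqpt u) in h2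
        by (rewrite <- (eqpt_period (u - 2*PI)); f_equal; ring).
      exists r'; split; auto; lra. }
  destruct (classic (forall eta, 0 < eta -> forall u, s <= u <= t -> cheap eta u)) as [HA|HA];
    [left; intros u Hu eta Heta; apply HA; auto | right].
  apply not_all_ex_not in HA. destruct HA as [eta0 HA].
  apply imply_to_and in HA. destruct HA as [Heta0 HA].
  intros u Hu eta Heta.
  pose proof (Rmin_l eta eta0); pose proof (Rmin_r eta eta0).
  destruct (cover (Rmin eta eta0) (Rmin_glb_lt _ _ _ Heta Heta0)) as [A|B].
  - exfalso; apply HA. intros v Hv. destruct (A v Hv) as [r [h1 h2]].
    exists r; split; auto; lra.
  - destruct (B u Hu) as [r [h1 h2]]. exists r; split; auto; lra.
Qed.

Lemma equator_class_arc_connected x : inZ x ->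
  arc_connected (fun p => onS1 p /\ dZ_null (zS p) x).
Proof.
  intros Hx p q [Hp Np] [Hq Nq].
  destruct (angle_exists p Hp) as [s <-].
  destruct (angle_exists q Hq) as [t0 <-].
  destruct (angle_in_window s t0) as [t [Hst Ht]]. rewrite <- Ht in *.
  assert (Nst : dZ_null (zS (eqpt s)) (zS (eqpt t)))
    by (apply dZ_null_trans with x; auto; apply dZ_null_sym; auto).
  assert (Hin : forall u, dZ_null (zS (eqpt s)) (zS (eqpt u)) ->
                  onS1 (eqpt u) /\ dZ_null (zS (eqpt u)) x).
  { intros u Hu. split; [apply eqpt_onS1|].
    apply dZ_null_trans with (zS (eqpt s)); auto.
    - apply dZ_null_sym; auto.
    - apply equator_inZ, eqpt_onS1. }
  destruct (null_class_arc s t Hst Nst) as [A|A].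
  - exists s, t. split; [lra|]. split; [left; auto|]. intros u hu; apply Hin, A; auto.
  - exists t, (s + 2*PI). split; [lra|]. split; [right; rewrite eqpt_period; auto|].
    intros u hu; apply Hin, A; auto.
Qed.

Lemma arc_connected_image (F : pt -> Prop) : arc_connected F ->
  arc_connected (fun a => onS1 a /\ F (ginv a)).
Proof.
  intros HF p q [Hp Fp] [Hq Fq].
  destruct (proj1 Hhomeo p Hp) as (_&_&_&Hgp).
  destruct (proj1 Hhomeo q Hq) as (_&_&_&Hgq).
  destruct (HF _ _ Fp Fq) as [a [b [Hab [Hends Harc]]]].
  exists (G a), (G b). split; [apply G_mono; auto|]. split.
  - rewrite <- !G_lifts.
    destruct Hends as [[-> ->]|[-> ->]]; [left|right]; split; auto.
  - intros u Hu. destruct (G_surj u) as [w <-].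
    assert (Hw : a <= w <= b)
      by (split; apply Rnot_lt_le; intro h; apply G_incr in h; lra).
    rewrite <- G_lifts.
    destruct (proj1 Hhomeo (eqpt w) (eqpt_onS1 w)) as (Hgw&_&Hback&_).
    split; auto. rewrite Hback. apply Harc; auto.
Qed.

Lemma arc_connected_ext (F F' : pt -> Prop) :
  (forall p, F p <-> F' p) -> arc_connected F -> arc_connected F'.
Proof.
  intros E HF p q Fp Fq. apply E in Fp; apply E in Fq.
  destruct (HF p q Fp Fq) as [a [b [Hab [Hends Harc]]]].
  exists a, b. repeat split; auto. intros u Hu. apply E, Harc; auto.
Qed.

(** A fibre contained in the equator is arc-connected: for Z_1 it is the
    equator part of the class, for Z_2 its image under [g]. *)
Lemma fibre_equator_arc_connected i x : inZ x ->
  (forall a, tilde_preimage g ginv i x a -> onS1 a) ->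
  arc_connected (tilde_preimage g ginv i x).
Proof.
  intros Hx HS1.
  assert (Hclosed : forall a, onS1 a -> closedH i a)
    by (intros a [h1 h2]; destruct i; split; auto; lra).
  destruct i.
  - apply (arc_connected_ext (fun p => onS1 p /\ dZ_null (zS p) x)).
    + intros p. rewrite fibre_iff. split; [intros [Hp Np]; auto|].
      intros Fp. split; [apply HS1, fibre_iff, Fp | apply Fp].
    + apply equator_class_arc_connected; auto.
  - apply (arc_connected_ext (fun a => onS1 a /\ (onS1 (ginv a) /\ dZ_null (zS (ginv a)) x))).
    + intros a. rewrite fibre_iff. split.
      * intros [Ha [_ Na]]. rewrite iotaZ_north_equator by auto. auto.
      * intros Fa. assert (Ha : onS1 a) by (apply HS1, fibre_iff, Fa).
        destruct Fa as [_ Na]. rewrite iotaZ_north_equator in Na by auto.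
        split; [auto|split; [apply (proj1 Hhomeo a Ha) | auto]].
    + apply (arc_connected_image (fun p => onS1 p /\ dZ_null (zS p) x)).
      apply equator_class_arc_connected; auto.
Qed.

End Lift.

Lemma fibre_off_equator i x a : inZ x -> tilde_preimage g ginv i x a -> ~ onS1 a ->
  scompact (tilde_preimage g ginv i x) /\ sconnected (tilde_preimage g ginv i x) /\
  forall b, tilde_preimage g ginv i x b -> b = a.
Proof.
  intros Hx Fa Na.
  assert (Ha : openH i a).
  { apply fibre_iff in Fa. destruct Fa as [[h1 h2] _]. split; auto.
    destruct i, (Req_dec (pz a) 0); try lra; exfalso; apply Na; split; auto. }
  pose proof (fibre_interior_unique i x a Hx Ha Fa) as Hunique.
  destruct (singleton_compact_connected _ a (proj1 Ha) Fa Hunique). auto.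
Qed.

End Gluing.

Theorem lemma3p3 (g ginv : pt -> pt)
  (Hhomeo : circle_homeo g ginv) (Hor : orientation_preserving g) (i : hemi) :
  (* 1-Lipschitz *)
  (forall a b, closedH i a -> closedH i b ->
     Rbar_le (dZ g (iotaZ ginv i a) (iotaZ ginv i b)) (Finite (gdist a b))) /\
  (* local isometry on the open hemisphere Z_i *)
  (forall a, openH i a -> exists eps, 0 < eps /\
     forall b c, openH i b -> openH i c -> gdist a b < eps -> gdist a c < eps ->
       dZ g (iotaZ ginv i b) (iotaZ ginv i c) = Finite (gdist b c)) /\
  (* fibres over every point Q x of Z~ *)
  (forall x, inZ x ->
     scompact (tilde_preimage g ginv i x) /\
     sconnected (tilde_preimage g ginv i x) /\
     ((exists a b, tilde_preimage g ginv i x a /\ tilde_preimage g ginv i x b /\ a <> b) ->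
      forall a, tilde_preimage g ginv i x a -> onS1 a)).
Proof.
  destruct Hor as [G [G_incr [G_period G_lifts]]].
  split; [exact (iotaZ_lipschitz g ginv Hhomeo i)|].
  split; [exact (iotaZ_local_isometry g ginv Hhomeo i)|].
  intros x Hx.
  destruct (classic (exists a, tilde_preimage g ginv i x a /\ ~ onS1 a))
    as [[a [Fa Na]]|Hequator].
  -
    destruct (fibre_off_equator g ginv Hhomeo i x a Hx Fa Na) as (Hcomp & Hconn & Hunique).
    split; [|split]; auto.
    intros (a1 & b1 & F1 & F2 & Hne). exfalso. apply Hne.
    now rewrite (Hunique a1 F1), (Hunique b1 F2).
  -
    assert (HS1 : forall a, tilde_preimage g ginv i x a -> onS1 a)
      by (intros a Fa; apply NNPP; intro h; apply Hequator; eauto).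
    split; [|split; [|auto]].
    + apply angle_closed_compact; auto. apply fibre_angle_closed; auto.
    + apply arc_connected_connected.
      apply (fibre_equator_arc_connected g ginv Hhomeo G); auto.
Qed.
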